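(* Let $K\subseteq\mathbb{R}^d$ be a compact, smooth $d$-manifold with boundary. For every $\lambda>0$ there exists $\rho_2=\rho_2(K,\lambda)>0$ such that if $x\in K$, $B(y,r)\subseteq K$ and $\|x-y\|\leq\lambda r$ for some $0<r<\rho_2$, then $\operatorname{conv}(\{x,y\})\subseteq K$.
   Context: $K\subseteq\mathbb{R}^d$ being a smooth $d$-manifold with boundary means: for every $x\in K$ there are open sets $O,U\subseteq\mathbb{R}^d$ with $x\in O$ and a diffeomorphism $\varphi:O\to U$ with $\varphi[O\cap K]=U\cap\mathbb{H}^d$, where $\mathbb{H}^d=[0,\infty)\times\mathbb{R}^{d-1}$. $B(y,r)$ is the open Euclidean ball; $\operatorname{conv}$ denotes convex hull. *)

From HB Require Import structures.
From mathcomp Require Import all_boot all_order all_algebra.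
From mathcomp Require Import all_classical all_reals all_analysis.
Set Implicit Arguments. Unset Strict Implicit. Unset Printing Implicit Defensive.
Import Order.TTheory GRing.Theory Num.Theory.
Import numFieldNormedType.Exports.
Local Open Scope classical_set_scope.
Local Open Scope ring_scope.

(* R^d is modelled as the row vectors 'rV[R]_d (topology = product topology,
   the usual one on R^d). *)

Definition enorm {R : realType} {d : nat} (v : 'rV[R]_d) : R :=
  Num.sqrt (\sum_(i < d) v ord0 i ^+ 2).

Definition eball {R : realType} {d : nat} (y : 'rV[R]_d) (r : R) : set 'rV[R]_d :=
  [set z | enorm (z - y) < r].

Definition convex_setR {R : realType} {d : nat} (C : set 'rV[R]_d) : Prop :=
  forall a b (t : R), C a -> C b -> 0 <= t <= 1 -> C ((1 - t) *: a + t *: b).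

Definition convex_hull {R : realType} {d : nat} (A : set 'rV[R]_d) : set 'rV[R]_d :=
  \bigcap_(C in [set C : set 'rV[R]_d | convex_setR C /\ A `<=` C]) C.

Fixpoint iterD {R : realType} {d : nat} (vs : seq 'rV[R]_d)
    (f : 'rV[R]_d -> 'rV[R]_d) : 'rV[R]_d -> 'rV[R]_d :=
  match vs with
  | [::] => f
  | v :: vs' => (fun x => derive (iterD vs' f) x v)
  end.

Definition smooth_on {R : realType} {d : nat} (O : set 'rV[R]_d)
    (f : 'rV[R]_d -> 'rV[R]_d) : Prop :=
  forall (vs : seq 'rV[R]_d) (x : 'rV[R]_d), O x ->
    {for x, continuous (iterD vs f)} /\
    (forall v : 'rV[R]_d, derivable (iterD vs f) x v).

Definition diffeo_on {R : realType} {d : nat} (O U : set 'rV[R]_d)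
    (phi : 'rV[R]_d -> 'rV[R]_d) : Prop :=
  exists psi : 'rV[R]_d -> 'rV[R]_d,
    [/\ phi @` O = U, (forall x, O x -> psi (phi x) = x),
        (forall u, U u -> phi (psi u) = u),
        smooth_on O phi & smooth_on U psi].

Definition halfspace {R : realType} {d : nat} : set 'rV[R]_d :=
  [set v | forall i : 'I_d, nat_of_ord i = 0%N -> 0 <= v ord0 i].

Definition smooth_manifold_with_boundary {R : realType} {d : nat}
    (K : set 'rV[R]_d) : Prop :=
  forall x, K x -> exists (O U : set 'rV[R]_d) (phi : 'rV[R]_d -> 'rV[R]_d),
    [/\ open O, open U, O x, diffeo_on O U phi & phi @` (O `&` K) = U `&` halfspace].

From Pilot Require Import Defs.
From HB Require Import structures.
From mathcomp Require Import all_boot all_order all_algebra.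
From mathcomp Require Import all_classical all_reals all_analysis.
From mathcomp Require Import ring lra.
Import Order.TTheory GRing.Theory Num.Theory.
Import numFieldNormedType.Exports.
Local Open Scope classical_set_scope.
Local Open Scope ring_scope.

(* Near a point p of K, a boundary chart phi turns K into {phi_0 >= 0}.  Along
   the segment from x to y the function h t := phi_0 (x + t (y - x)) has a
   derivative whose oscillation is O(|y - x|^2) = O(r^2), so h stays above its
   chord up to an O(r^2) error.  Now h 0 >= 0 since x is in K, and h 1 >= r / C
   since B(y, r) lies in K and phi^-1 is Lipschitz; hence h >= 0 on [0, 1] once
   r is small.  Compactness of K makes the threshold on r uniform. *)

Section MaxNorm.
Context {R : realType} {m k : nat}.
Implicit Types (M : 'M[R]_(m, k)) (C : R).

Lemma normr_mx_entry M i j : `|M i j| <= `|M|.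
Proof. by rewrite [leRHS]/Num.Def.normr/= mx_normrE; exact: (le_bigmax _ _ (i, j)). Qed.

Lemma mx_normr_le M C : 0 <= C -> (forall i j, `|M i j| <= C) -> `|M| <= C.
Proof.
by move=> C0 MC; rewrite [leLHS]/Num.Def.normr/= mx_normrE (bigmax_le _ C0) // => -[i j].
Qed.

Lemma mx_normr_lt M C : 0 < C -> (forall i j, `|M i j| < C) -> `|M| < C.
Proof.
by move=> C0 MC; rewrite [ltLHS]/Num.Def.normr/= mx_normrE; apply/bigmax_ltP; split => // -[].
Qed.

End MaxNorm.

Lemma normr_delta_mx_le {R : realType} {d : nat} (j : 'I_d) : `|'e_j : 'rV[R]_d| <= 1.
Proof. by apply: mx_normr_le => // i l; rewrite mxE; case: (_ && _); rewrite ?normr1 ?normr0. Qed.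

Lemma sum_normr_rV_le {R : realType} {d : nat} (v : 'rV[R]_d) :
  \sum_(j < d) `|v 0 j| <= d%:R * `|v|.
Proof.
have -> : d%:R * `|v| = \sum_(j < d) `|v| by rewrite sumr_const card_ord mulr_natl.
by apply: ler_sum => j _; exact: normr_mx_entry.
Qed.

Lemma derive_bound_increment_le {R : realType} (f df : R -> R) (a b C : R) : a <= b ->
  (forall t, a <= t <= b -> is_derive t 1 f (df t) /\ `|df t| <= C) ->
  `|f b - f a| <= C * (b - a).
Proof.
move=> ab fab.
have [c /[!in_itv] /= /fab[_ dfc] ->] : exists2 c, c \in `[a, b] & f b - f a = df c * (b - a).
  apply: MVT_segment => // [t /[!in_itv] /= /andP[ta tb]|].
    by apply: (fab t _).1; rewrite !ltW.
  apply: derivable_within_continuous => t /[!in_itv] /= abt.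
  by have [[]] := fab t abt.
by rewrite normrM (ger0_norm (_ : 0 <= b - a)) ?subr_ge0 // ler_wpM2r ?subr_ge0.
Qed.

Lemma chord_le_of_derive_oscillation {R : realType} (h dh : R -> R) (c t : R) :
  (forall s : R, 0 <= s <= 1 -> is_derive s 1 h (dh s)) ->
  (forall s1 s2 : R, 0 <= s1 <= 1 -> 0 <= s2 <= 1 -> dh s2 - dh s1 <= c) ->
  0 <= t <= 1 -> (1 - t) * h 0 + t * h 1 - t * (1 - t) * c <= h t.
Proof.
move=> hd osc /andP[t0 t1].
have mvt a b : 0 <= a -> a <= b -> b <= 1 ->
    exists2 s, a <= s <= b & h b - h a = dh s * (b - a).
  move=> a0 ab b1.
  have [s /[!in_itv] /= sab ->] : exists2 s, s \in `[a, b] & h b - h a = dh s * (b - a).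
    apply: MVT_segment => // [s /[!in_itv] /= /andP[a_s sb]|].
      by apply: hd; rewrite (le_trans a0 (ltW a_s)) (le_trans (ltW sb) b1).
    apply: derivable_within_continuous => s /[!in_itv] /= /andP[a_s sb].
    by have [] := hd s; rewrite ?(le_trans a0 a_s) ?(le_trans sb b1).
  by exists s.
have [s1 /andP[s10 s1t] e1] := mvt 0 t (lexx 0) t0 t1.
have [s2 /andP[s2t s21] e2] := mvt t 1 t0 t1 (lexx 1).
have osc12 : 0 <= c - (dh s2 - dh s1).
  by rewrite subr_ge0; apply: osc; rewrite ?s10 ?s21 ?(le_trans s1t t1) ?(le_trans t0 s2t).
have -> : h t = h 0 + dh s1 * t by rewrite -[t in dh s1 * t]subr0 -e1 addrC subrK.
have -> : h 1 = h 0 + dh s1 * t + dh s2 * (1 - t) by rewrite -[t in dh s1 * t]subr0 -e1 -e2; ring.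
rewrite -subr_ge0; set a := dh s1; set b := dh s2.
have -> : h 0 + a * t - ((1 - t) * h 0 + t * (h 0 + a * t + b * (1 - t)) - t * (1 - t) * c)
  = t * (1 - t) * (c - (b - a)) by ring.
by rewrite !mulr_ge0 // subr_ge0.
Qed.

Section LineDerivative.
Context {R : realType} {V : normedModType R} {m k : nat} (F : V -> 'M[R]_(m, k)).

Lemma derivable_line (u v : V) (t : R) : derivable F (u + t *: v) v ->
  derivable (fun s : R => F (u + s *: v)) t 1 /\
  'D_1 (fun s : R => F (u + s *: v)) t = 'D_v F (u + t *: v).
Proof.
have E : (fun h : R => h^-1 *: (((fun s => F (u + s *: v)) \o shift t) (h *: 1)
                                   - F (u + t *: v)))
        = (fun h : R => h^-1 *: ((F \o shift (u + t *: v)) (h *: v) - F (u + t *: v))).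
  apply/funext => h /=; congr (_ *: (F _ - _)).
  by rewrite /shift /= [h *: 1]mulr1 scalerDl addrCA.
by rewrite /derivable /derive E.
Qed.

Lemma is_derive_line_entry (u v : V) (t : R) i j : derivable F (u + t *: v) v ->
  is_derive t 1 (fun s : R => F (u + s *: v) i j) ('D_v F (u + t *: v) i j).
Proof.
move=> /derivable_line[/[dup] dF /derivable_mxP/(_ i j) dFij <-].
by split => //; rewrite derive_mx // mxE.
Qed.

Lemma line_increment_le (u v : V) (s C : R) (D : 'M[R]_(m, k)) :
  (forall t, (0 <= t <= s) \/ (s <= t <= 0) ->
     derivable F (u + t *: v) v /\ `|'D_v F (u + t *: v) - D| <= C) ->
  `|F (u + s *: v) - F u - s *: D| <= C * `|s|.
Proof.
move=> HF.
have C0 : 0 <= C.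
  have [|_ /(le_trans (normr_ge0 _))//] := HF 0.
  by case: (leP 0 s) => s0; [left | right]; rewrite lexx ?s0 ?ltW.
apply: mx_normr_le => [|i j]; first exact: mulr_ge0.
pose phi : R -> R := (fun t : R => F (u + t *: v) i j) - D i j \*: id.
have dphi t : (0 <= t <= s) \/ (s <= t <= 0) ->
    is_derive t 1 phi ('D_v F (u + t *: v) i j - D i j)
    /\ `|'D_v F (u + t *: v) i j - D i j| <= C.
  move=> /HF[dF DC]; split.
    rewrite -[X in _ - X]mulr1; apply: is_deriveB; exact: is_derive_line_entry.
  by move: (normr_mx_entry ('D_v F (u + t *: v) - D) i j); rewrite !mxE => /le_trans; apply.
have -> : (F (u + s *: v) - F u - s *: D) i j = phi s - phi 0.
  by rewrite /phi !mxE !fctE /= scale0r addr0 scaler0 /GRing.scale /=; ring.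
have [s0|s0] := leP 0 s.
  rewrite (ger0_norm s0) -[s in leRHS]subr0.
  by apply: derive_bound_increment_le => // t st; apply: dphi; left.
rewrite (ltr0_norm s0) distrC -[- s]sub0r.
by apply: derive_bound_increment_le => [|t st]; [exact: ltW | apply: dphi; right].
Qed.

End LineDerivative.

Lemma sum_ord_ltS (V : nmodType) (d : nat) (G : 'I_d -> V) (j : 'I_d) :
  \sum_(l < d | (l < j.+1)%N) G l = \sum_(l < d | (l < j)%N) G l + G j.
Proof.
rewrite (bigD1 j) //= addrC; congr (_ + _); apply: eq_bigl => l.
by rewrite ltnS leq_eqVlt -val_eqE; case: eqP => [->|]; rewrite ?ltnn ?andbT ?andbF.
Qed.

Definition staircase {R : realType} {d : nat} (a b : 'rV[R]_d) (k : nat) : 'rV[R]_d :=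
  \row_j (if (j < k)%N then b 0 j else a 0 j).

Section Staircase.
Context {R : realType} {d : nat}.
Implicit Types (a b c : 'rV[R]_d) (rho t : R).

Lemma staircase0 a b : staircase a b 0 = a.
Proof. by apply/matrixP => i l; rewrite !mxE (ord1 i). Qed.

Lemma staircase_end a b : staircase a b d = b.
Proof. by apply/matrixP => i l; rewrite !mxE (ord1 i) ltn_ord. Qed.

Lemma staircaseS a b (j : 'I_d) :
  staircase a b j.+1 = staircase a b j + (b 0 j - a 0 j) *: 'e_j.
Proof.
apply/matrixP => i l; rewrite !mxE (ord1 i) eqxx /= ltnS leq_eqVlt -val_eqE.
by case: eqP => [/val_inj ->|]; rewrite ?ltnn ?mulr1 ?mulr0 ?addr0 // addrC subrK.
Qed.

Lemma staircase_step_in_ball {a b c rho} {j : 'I_d} {t} :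
  ball c rho a -> ball c rho b ->
  (0 <= t <= b 0 j - a 0 j) \/ (b 0 j - a 0 j <= t <= 0) ->
  ball c rho (staircase a b j + t *: 'e_j).
Proof.
rewrite -!ball_normE /= => ca cb tj.
apply: mx_normr_lt => [|i l]; first exact: le_lt_trans ca.
have := le_lt_trans (normr_mx_entry (c - a) i l) ca.
have := le_lt_trans (normr_mx_entry (c - b) i l) cb.
rewrite !mxE (ord1 i) /=; case: (eqVneq l j) => [->|lj]; last first.
  by rewrite mulr0 addr0; case: ifP.
rewrite ltnn mulr1 !ltr_norml => /andP[? ?] /andP[? ?].
by case: tj => /andP[? ?]; apply/andP; split; lra.
Qed.

End Staircase.

Section Partials.
Context {R : realType} {d m k : nat}.
Implicit Types (F : 'rV[R]_d -> 'M[R]_(m, k)) (a b c z w : 'rV[R]_d) (rho C : R).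

Lemma staircase_increment_le {F c a b rho C} {D : 'I_d -> 'M[R]_(m, k)} :
  (forall z, ball c rho z -> forall j,
     derivable F z 'e_j /\ `|'D_'e_j F z - D j| <= C) ->
  ball c rho a -> ball c rho b ->
  `|F b - F a - \sum_(j < d) (b 0 j - a 0 j) *: D j|
    <= C * \sum_(j < d) `|b 0 j - a 0 j|.
Proof.
move=> HF ca cb.
suff corner q : (q <= d)%N ->
    `|F (staircase a b q) - F a - \sum_(j < d | (j < q)%N) (b 0 j - a 0 j) *: D j|
      <= C * \sum_(j < d | (j < q)%N) `|b 0 j - a 0 j|.
  by have := corner d (leqnn d); rewrite staircase_end !(eq_bigl _ _ (fun j => ltn_ord j)).
elim: q => [_|q IH qd]; first by rewrite staircase0 subrr !big_pred0 ?mulr0 ?subr0 ?normr0.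
pose j := Ordinal qd; rewrite -[q.+1]/(j.+1) staircaseS !sum_ord_ltS.
have step := line_increment_le F (staircase a b j) 'e_j (b 0 j - a 0 j) C (D j)
  (fun t tj => HF _ (staircase_step_in_ball ca cb tj) j).
set P := staircase a b j; set S := \sum_(l < d | _) _; set T := _ *: D j.
rewrite (_ : _ - F a - (S + T) = (F (P + (b 0 j - a 0 j) *: 'e_j) - F P - T) + (F P - F a - S)).
  rewrite mulrDr [leRHS]addrC; apply: le_trans (ler_normD _ _) _.
  exact: lerD step (IH (ltnW qd)).
by rewrite [RHS]addrACA subrKA opprD (addrC (- S)) addrA.
Qed.

Lemma lipschitz_of_partials_le {F c rho C} : 0 <= C ->
  (forall z, ball c rho z -> forall j, derivable F z 'e_j /\ `|'D_'e_j F z| <= C) ->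
  (C * d%:R).-lipschitz_(ball c rho) F.
Proof.
move=> C0 HF [a b] /= [ca cb].
have HF0 z : ball c rho z -> forall j, derivable F z 'e_j /\ `|'D_'e_j F z - 0| <= C.
  by move=> /HF + j => /(_ j); rewrite subr0.
have := staircase_increment_le HF0 cb ca.
rewrite big1 => [|j _]; last by rewrite scaler0.
rewrite subr0 => /le_trans; apply; rewrite -mulrA ler_wpM2l //.
by have := sum_normr_rV_le (a - b); under eq_bigr do rewrite !mxE.
Qed.

Lemma derivable_partials_sum F z w :
  (forall j, \forall u \near z, derivable F u 'e_j) ->
  (forall j, {for z, continuous ('D_'e_j F)}) ->
  derivable F z w /\ 'D_w F z = \sum_(j < d) w 0 j *: 'D_'e_j F z.
Proof.
move=> dF cF; set L := \sum_(j < d) _.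
suff FL : (fun h : R => h^-1 *: ((F \o shift z) (h *: w) - F z)) @ 0^' --> L.
  by split; [apply/cvg_ex; exists L | apply: cvg_lim].
apply/cvgrPdist_le => e e0.
have W0 : 0 < d%:R * `|w| + 1 by rewrite ltr_pwDr // mulr_ge0.
set eps := e / (d%:R * `|w| + 1).
have near_partials j : \forall u \near z,
    derivable F u 'e_j /\ `|'D_'e_j F u - 'D_'e_j F z| <= eps.
  have /cvgrPdist_le/(_ eps (divr_gt0 e0 W0)) Dclose := cF j.
  near=> u; split; first by near: u; exact: dF.
  by rewrite distrC; near: u.
have [rho rho0 near_z] := (nbhs_ballP _ _).1 (filter_forall _ near_partials).
near=> h.
have h0 : h != 0 by near: h; exact: nbhs_dnbhs_neq.
have zb : ball z rho (h *: w + z).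
  rewrite -ball_normE /= opprD addrCA subrr addr0 normrN normrZ.
  apply: le_lt_trans (_ : `|h| * (`|w| + 1) < rho); first by rewrite ler_wpM2l // lerDl.
  rewrite -ltr_pdivlMr ?ltr_pwDr //.
  by near: h; apply: dnbhs0_lt; rewrite divr_gt0 ?ltr_pwDr.
have sum_hw : \sum_(j < d) `|h * w 0 j| <= d%:R * (`|h| * `|w|).
  by rewrite -normrZ; have := sum_normr_rV_le (h *: w); under eq_bigr do rewrite mxE.
have := staircase_increment_le near_z (ballxx z rho0) zb.
have dz j : (h *: w + z) 0 j - z 0 j = h * w 0 j by rewrite !mxE addrK.
under eq_bigr do rewrite dz -scalerA.
under [X in _ <= _ * X]eq_bigr do rewrite dz.
rewrite -scaler_sumr -/L => /le_trans/(_ (ler_wpM2l (ltW (divr_gt0 e0 W0)) sum_hw)) est.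
have -> : L - h^-1 *: ((F \o shift z) (h *: w) - F z)
          = h^-1 *: (h *: L - (F (h *: w + z) - F z)).
  by rewrite [RHS]scalerBr scalerA mulVf // scale1r.
rewrite normrZ normfV -normrN opprB ler_pdivrMl ?normr_gt0 //; apply: le_trans est _.
have -> : eps * (d%:R * (`|h| * `|w|)) = `|h| * e * (d%:R * `|w|) / (d%:R * `|w| + 1).
  by rewrite /eps; field; rewrite gt_eqF.
by rewrite ler_pdivrMr // ler_wpM2l ?mulr_ge0 ?(ltW e0) // lerDl.
Unshelve. all: by end_near.
Qed.

End Partials.

Section SmoothMaps.
Context {R : realType} {d : nat}.

Lemma smooth_on_derive {W : set 'rV[R]_d} {f : 'rV[R]_d -> 'rV[R]_d} (v : 'rV[R]_d) :
  smooth_on W f -> smooth_on W ('D_v f).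
Proof.
move=> fs vs; have -> : Defs.iterD vs ('D_v f) = Defs.iterD (rcons vs v) f.
  by elim: vs => //= w vs ->.
exact: fs.
Qed.

Lemma smooth_on_locally_lipschitz {W : set 'rV[R]_d} {I : finType}
    (G : I -> 'rV[R]_d -> 'rV[R]_d) {z : 'rV[R]_d} :
  open W -> W z -> (forall i, smooth_on W (G i)) ->
  exists2 s, 0 < s & ball z s `<=` W /\
    exists2 L, 0 < L & forall i, L.-lipschitz_(ball z s) (G i).
Proof.
move=> Wo Wz Gs.
pose C := 1 + \sum_(p : I * 'I_d) `|'D_'e_p.2 (G p.1) z|.
have C0 : 0 <= C by rewrite addr_ge0 ?sumr_ge0.
have near_partials (p : I * 'I_d) : \forall u \near z,
    derivable (G p.1) u 'e_p.2 /\ `|'D_'e_p.2 (G p.1) u| <= C.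
  have [/cvgrPdist_le/(_ 1 ltr01) Dclose _] := Gs p.1 [:: 'e_p.2] z Wz.
  have Dz_le : `|'D_'e_p.2 (G p.1) z| + 1 <= C.
    by rewrite /C addrC lerD2l (bigD1 p) //= lerDl sumr_ge0.
  near=> u; split.
    have Wu : W u by near: u; exact: Wo.
    by have [_] := Gs p.1 [::] u Wu; apply.
  apply: le_trans Dz_le; rewrite -lerBlDl; apply: le_trans (lerB_dist _ _) _.
  by rewrite distrC; near: u.
have near_all : \forall u \near z, W u /\ forall p : I * 'I_d,
    derivable (G p.1) u 'e_p.2 /\ `|'D_'e_p.2 (G p.1) u| <= C.
  by near=> u; split; near: u; [exact: Wo | exact: filter_forall].
have [s s0 near_z] := (nbhs_ballP _ _).1 near_all.
exists s => //; split=> [u /near_z[] //|].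
exists (C * d%:R + 1) => [|i]; first by rewrite ltr_pwDr ?mulr_ge0.
have lipG := lipschitz_of_partials_le (F := G i) (c := z) (rho := s) C0
  (fun u zu j => (near_z u zu).2 (i, j)).
move=> xy /lipG /le_trans; apply.
by rewrite ler_wpM2r // lerDl.
Unshelve. all: by end_near.
Qed.

End SmoothMaps.

Section EuclideanNorm.
Context {R : realType} {d : nat}.
Implicit Types v : 'rV[R]_d.

Lemma enorm0 : enorm (0 : 'rV[R]_d) = 0.
Proof. by rewrite /enorm big1 ?sqrtr0 // => i _; rewrite mxE expr0n. Qed.

Lemma enormN v : enorm (- v) = enorm v.
Proof. by rewrite /enorm; congr Num.sqrt; apply: eq_bigr => j _; rewrite mxE sqrrN. Qed.

Lemma normr_le_enorm v : `|v| <= enorm v.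
Proof.
apply: mx_normr_le => [|i j]; first exact: sqrtr_ge0.
rewrite (ord1 i) -sqrtr_sqr ler_wsqrtr // (bigD1 j) //= lerDl.
by rewrite sumr_ge0 // => l _; rewrite sqr_ge0.
Qed.

Lemma enorm_le_normr v : enorm v <= d%:R * `|v|.
Proof.
rewrite -[leRHS]ger0_norm ?mulr_ge0 // -sqrtr_sqr ler_wsqrtr //.
apply: le_trans (_ : \sum_(i < d) `|v| ^+ 2 <= _).
  apply: ler_sum => i _; rewrite -real_normK ?num_real // lerXn2r ?nnegrE //.
  exact: normr_mx_entry.
rewrite sumr_const card_ord exprMn -[_ *+ d]mulr_natl ler_wpM2r ?sqr_ge0 //.
by case: d v => [|d'] v; rewrite ?expr0n // expr2 ler_peMr // ler1n.
Qed.

End EuclideanNorm.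

Lemma chord_le_of_lipschitz_partials {R : realType} {d : nat} {O : set 'rV[R]_d}
    {F : 'rV[R]_d -> 'rV[R]_d} {c x w : 'rV[R]_d} {rho L t : R} (i : 'I_d) :
  open O -> smooth_on O F -> ball c rho `<=` O -> 0 <= L ->
  (forall j, L.-lipschitz_(ball c rho) ('D_'e_j F)) ->
  (forall s : R, 0 <= s <= 1 -> ball c rho (x + s *: w)) -> 0 <= t <= 1 ->
  (1 - t) * F x 0 i + t * F (x + w) 0 i - t * (1 - t) * (d%:R * L * `|w| ^+ 2)
    <= F (x + t *: w) 0 i.
Proof.
move=> Oo Fs cO L0 Lip seg t01.
have DF s : 0 <= s <= 1 -> derivable F (x + s *: w) w /\
    'D_w F (x + s *: w) = \sum_(j < d) w 0 j *: 'D_'e_j F (x + s *: w).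
  move=> s01; apply: derivable_partials_sum => j.
    near=> u; have Ou : O u by near: u; exact: Oo _ (cO _ (seg s s01)).
    by have [_] := Fs [::] u Ou; apply.
  by have [] := Fs [:: 'e_j] _ (cO _ (seg s s01)).
have := chord_le_of_derive_oscillation (fun s => F (x + s *: w) 0 i)
  (fun s => 'D_w F (x + s *: w) 0 i) (d%:R * L * `|w| ^+ 2) t _ _ t01.
rewrite /= scale0r addr0 scale1r; apply.
  by move=> s s01; apply: is_derive_line_entry; exact: (DF s s01).1.
move=> s1 s2 s1_01 s2_01.
have z12 : `|x + s2 *: w - (x + s1 *: w)| <= `|w|.
  rewrite opprD addrACA subrr add0r -scalerBl normrZ ler_piMl //.
  by move: s1_01 s2_01 => /andP[? ?] /andP[? ?]; rewrite ler_norml; apply/andP; split; lra.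
apply: le_trans (ler_norm _) _.
have := normr_mx_entry ('D_w F (x + s2 *: w) - 'D_w F (x + s1 *: w)) 0 i.
rewrite !mxE => /le_trans; apply.
rewrite (DF s2 s2_01).2 (DF s1 s1_01).2 -sumrB.
apply: le_trans (ler_norm_sum _ _ _) _.
apply: le_trans (_ : \sum_(j < d) `|w| * (L * `|w|) <= _).
  apply: ler_sum => j _; rewrite -scalerBr normrZ.
  apply: ler_pM => //; first exact: normr_mx_entry.
  apply: le_trans (Lip j (_, _) (conj (seg s2 s2_01) (seg s1 s1_01))) _.
  exact: ler_wpM2l.
by rewrite sumr_const card_ord -[_ *+ d]mulr_natl expr2 [`|w| * _]mulrCA !mulrA.
Unshelve. all: by end_near.
Qed.

Definition segment {R : realType} {d : nat} (x y : 'rV[R]_d) : set 'rV[R]_d :=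
  [set x + t *: (y - x) | t in `[0, 1]].

Lemma convex_hull_pair_sub_segment {R : realType} {d : nat} (x y : 'rV[R]_d) :
  convex_hull ([set x] `|` [set y]) `<=` segment x y.
Proof.
move=> z; apply; split=> [a b s [t1 + <-] [t2 + <-]|u [->|->]].
- rewrite /= !in_itv /= => t1_01 t2_01 s01; exists ((1 - s) * t1 + s * t2).
    by rewrite /= in_itv /=; apply/andP; split; nra.
  by apply/matrixP => i j; rewrite !mxE; ring.
- by exists 0; rewrite ?scale0r ?addr0 //= in_itv /= lexx ler01.
- by exists 1; rewrite ?scale1r ?(addrC x) ?subrK //= in_itv /= lexx ler01.
Qed.

Section BoundaryChart.
Context {R : realType} {n : nat} {K O U : set 'rV[R]_n.+1}
  {phi psi : 'rV[R]_n.+1 -> 'rV[R]_n.+1}.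
Hypotheses (phiO : phi @` O = U) (phiK : forall x, O x -> psi (phi x) = x)
  (phi_boundary : phi @` (O `&` K) = U `&` halfspace).

Lemma boundary_chart_memE z : O z -> K z <-> 0 <= phi z 0 ord0.
Proof.
move=> Oz; split=> [Kz|phiz0].
  have : (U `&` halfspace) (phi z) by rewrite -phi_boundary; exists z.
  by case=> _; apply.
have : (U `&` halfspace) (phi z).
  split=> [|i i0]; first by rewrite -phiO; exists z.
  by rewrite (_ : i = ord0) //; apply: val_inj.
by rewrite -phi_boundary => -[z' [Oz' Kz'] /(congr1 psi)]; rewrite !phiK // => <-.
Qed.

Lemma boundary_chart_ball_height {q y : 'rV[R]_n.+1} {sp Lp r : R} :
  0 < Lp -> 0 < r -> ball q sp `<=` U -> Lp.-lipschitz_(ball q sp) psi ->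
  O y -> ball q (sp / 2) (phi y) -> eball y r `<=` K ->
  r <= n.+1%:R * Lp * (sp / 2) -> r / (n.+1%:R * Lp) <= phi y 0 ord0.
Proof.
move=> Lp0 r0 qU psiLip Oy qy yrK rsp.
set L := n.+1%:R * Lp; have L0 : 0 < L by rewrite mulr_gt0.
have y0 : 0 <= phi y 0 ord0.
  by apply/boundary_chart_memE => //; apply: yrK; rewrite /eball /= subrr enorm0.
rewrite leNgt; apply/negP => ylow.
(* Lowering phi y by c < r / L in the normal direction leaves K, yet stays
   within r of y because psi is Lipschitz. *)
pose c := (phi y 0 ord0 + r / L) / 2.
have c0 : 0 <= c by rewrite /c; lra.
have c_lt : c < r / L by rewrite /c; lra.
pose u := phi y - c *: 'e_ord0.
have uy : `|u - phi y| <= c.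
  by rewrite /u addrAC subrr add0r normrN normrZ ger0_norm // ler_piMr ?normr_delta_mx_le.
have qu : ball q sp u.
  move: qy; rewrite -!ball_normE /= => qy.
  rewrite -(subrKA (phi y)); apply: le_lt_trans (ler_normD _ _) _.
  have : r / L <= sp / 2 by rewrite ler_pdivrMr // mulrC.
  by move: uy c_lt; rewrite distrC; lra.
have [z Oz phiz] : exists2 z, O z & phi z = u by move: (qU u qu); rewrite -phiO => -[z]; exists z.
have zK : ~ K z.
  by rewrite boundary_chart_memE // phiz /u !mxE eqxx mulr1 /c; lra.
apply: zK; apply: yrK; rewrite /eball /=.
apply: le_lt_trans (enorm_le_normr _) _.
apply: le_lt_trans (_ : L * c < r); last by rewrite mulrC -ltr_pdivlMr.
have -> : z - y = psi u - psi (phi y) by rewrite -phiz !phiK.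
rewrite /L -mulrA ler_wpM2l //.
apply: le_trans (psiLip (u, phi y) (conj qu _)) _; last by rewrite /= ler_wpM2l // ltW.
by move: qy (normr_ge0 (q - phi y)); rewrite /= -!ball_normE /=; lra.
Qed.

Hypotheses (Oo : open O) (phis : smooth_on O phi).

Lemma boundary_chart_segment {p q x y : 'rV[R]_n.+1} {S sp Lp L2 lambda r : R} :
  0 < Lp -> 0 <= L2 -> 0 < r ->
  ball q sp `<=` U -> Lp.-lipschitz_(ball q sp) psi ->
  ball p S `<=` O -> ball p S `<=` phi @^-1` ball q (sp / 2) ->
  (forall j, L2.-lipschitz_(ball p S) ('D_'e_j phi)) ->
  ball p (S / 2) x -> K x -> eball y r `<=` K -> enorm (x - y) <= lambda * r ->
  lambda * r < S / 2 -> r <= n.+1%:R * Lp * (sp / 2) ->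
  n.+1%:R * L2 * (lambda * r) ^+ 2 <= r / (n.+1%:R * Lp) ->
  segment x y `<=` K.
Proof.
move=> Lp0 L20 r0 qU psiLip pO p_phi DLip px Kx yrK xy lr_S r_sp deficit _ [t t01 <-].
set w := y - x.
have w_le : `|w| <= lambda * r by apply: le_trans (normr_le_enorm _) _; rewrite /w -enormN opprB.
have seg s : 0 <= s <= 1 -> ball p S (x + s *: w).
  move=> /andP[s0 s1]; move: px; rewrite -!ball_normE /= => px.
  rewrite opprD addrA; apply: le_lt_trans (ler_normB _ _) _; rewrite normrZ ger0_norm //.
  have : s * `|w| <= `|w| by rewrite ler_piMl.
  by move: w_le lr_S; lra.
have xw : x + w = y by rewrite addrC subrK.
have py : ball p S y by rewrite -xw -[w]scale1r; apply: seg; rewrite ler01 lexx.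
have hy := boundary_chart_ball_height Lp0 r0 qU psiLip (pO _ py) (p_phi _ py) yrK r_sp.
have hx : 0 <= phi x 0 ord0.
  apply/boundary_chart_memE => //; apply: pO.
  by rewrite -[x]addr0 -[0](scale0r w); apply: seg; rewrite lexx ler01.
move: t01; rewrite /= in_itv /= => t01.
apply/boundary_chart_memE; first exact: pO (seg t t01).
have := chord_le_of_lipschitz_partials ord0 Oo phis pO L20 DLip seg t01.
rewrite xw; apply: le_trans.
have Kc : n.+1%:R * L2 * `|w| ^+ 2 <= r / (n.+1%:R * Lp).
  apply: le_trans deficit; rewrite ler_wpM2l ?mulr_ge0 //.
  by apply: lerXn2r; rewrite ?nnegrE // (le_trans _ w_le).
move: t01 => /andP[t0 t1].
have : t * (1 - t) * (n.+1%:R * L2 * `|w| ^+ 2) <= t * phi y 0 ord0.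
  rewrite -mulrA ler_wpM2l // (le_trans _ (le_trans Kc hy)) // ler_piMl ?mulr_ge0 //.
  by rewrite lerBlDr lerDl.
have : 0 <= (1 - t) * phi x 0 ord0 by rewrite mulr_ge0 ?subr_ge0.
lra.
Qed.

End BoundaryChart.

Lemma manifold_segment_local {R : realType} {n : nat} {K : set 'rV[R]_n.+1}
    {lambda : R} {p : 'rV[R]_n.+1} :
  smooth_manifold_with_boundary K -> 0 < lambda -> K p ->
  exists2 delta, 0 < delta & exists2 rho, 0 < rho &
    forall x r, K x -> ball p delta x -> r < rho ->
    forall y, eball y r `<=` K -> enorm (x - y) <= lambda * r -> 0 < r ->
    segment x y `<=` K.
Proof.
move=> Kman lambda0 Kp.
case: (Kman p Kp) => O [U [phi [Oo Uo Op [psi [phiO phiK _ phis psis] phi_boundary]]]].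
have Uq : U (phi p) by rewrite -phiO; exists p.
have [sp sp0 [qU [Lp Lp0 psiLip]]] :=
  smooth_on_locally_lipschitz (fun _ : unit => psi) Uo Uq (fun=> psis).
have [s2 s20 [pO [L2 L20 DLip]]] := smooth_on_locally_lipschitz
  (fun j : 'I_n.+1 => 'D_'e_j phi) Oo Op (fun j => smooth_on_derive _ phis).
have [s3 s30 p_phi] : exists2 s3, 0 < s3 & ball p s3 `<=` phi @^-1` ball (phi p) (sp / 2).
  have [phic _] := phis [::] p Op.
  by apply/nbhs_ballP; apply: phic; apply: nbhsx_ballx; rewrite divr_gt0.
pose S := Num.min s2 s3; have S0 : 0 < S by rewrite lt_min s20 s30.
have [S_s2 S_s3] : S <= s2 /\ S <= s3 by rewrite !ge_min !lexx orbT.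
pose L := n.+1%:R * Lp; have L0 : 0 < L by rewrite mulr_gt0.
pose M := L * n.+1%:R * L2 * lambda ^+ 2; have M0 : 0 < M by rewrite !mulr_gt0 ?exprn_gt0.
exists (S / 2); first by rewrite divr_gt0.
exists (Num.min (S / 2 / lambda) (Num.min (L * (sp / 2)) M^-1)).
  by rewrite !lt_min !divr_gt0 ?mulr_gt0 ?invr_gt0.
move=> x r Kx px; rewrite !lt_min => /and3P[rS /ltW r_sp /ltW rM] y yrK xy r0.
apply: (boundary_chart_segment phiO phiK phi_boundary Oo phis (p := p) (S := S)
  (lambda := lambda) Lp0 (ltW L20) r0 qU (psiLip tt)) => //.
- by apply: subset_trans pO; apply: le_ball.
- by apply: subset_trans p_phi; apply: le_ball.
- by move=> j ab [? ?]; apply: DLip; split; apply: (le_ball S_s2).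
- by rewrite mulrC -ltr_pdivlMr.
rewrite ler_pdivlMr // exprMn.
have : r * M <= 1 by rewrite -ler_pdivlMr // mul1r.
by rewrite /M /L; nra.
Qed.

Lemma compact_uniform_radius {R : realType} {T : normedModType R} {K : set T}
    (P : T -> R -> Prop) :
  compact K ->
  (forall p, K p -> exists2 delta, 0 < delta & exists2 rho, 0 < rho &
     forall x r, K x -> ball p delta x -> r < rho -> P x r) ->
  exists2 rho, 0 < rho & forall x r, K x -> r < rho -> P x r.
Proof.
move=> Kc Kloc.
have /choice[f f_spec] : forall p, exists dr : R * R, [/\ 0 < dr.1, 0 < dr.2 &
    K p -> forall x r, K x -> ball p dr.1 x -> r < dr.2 -> P x r].
  move=> p; have [/Kloc[de de0 [rh rh0 H]]|nKp] := pselect (K p); first by exists (de, rh).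
  by exists (1, 1); split=> // /nKp.
move: Kc; rewrite compact_cover => /(_ _ K (fun p => ball p (f p).1)) [].
- by move=> p _; exact: ball_open.
- by move=> p Kp; exists p => //; apply: ballxx; have [] := f_spec p.
move=> D DK Kcov.
have [rho rho0 rho_le] : exists2 rho : R, 0 < rho &
    forall p, p \in finmap.enum_fset D -> rho <= (f p).2.
  elim: (finmap.enum_fset D) => [|a s [rho rho0 rho_le]]; first by exists 1.
  exists (Num.min rho (f a).2); first by have [_ fa0 _] := f_spec a; rewrite lt_min rho0.
  by move=> p; rewrite in_cons ge_min => /orP[/eqP ->|/rho_le ->]; rewrite ?lexx ?orbT.
exists rho => // x r Kx r_rho; have [p Dp px] := Kcov x Kx.
have [_ _] := f_spec p; apply => //; first by have := DK p Dp; rewrite inE.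
exact: lt_le_trans r_rho (rho_le p Dp).
Qed.

Theorem lemma3p7 (R : realType) (d : nat) (K : set 'rV[R]_d) :
  compact K -> smooth_manifold_with_boundary K ->
  forall lambda : R, 0 < lambda ->
  exists rho2 : R, 0 < rho2 /\
    forall (x y : 'rV[R]_d) (r : R),
      K x -> eball y r `<=` K -> enorm (x - y) <= lambda * r ->
      0 < r -> r < rho2 ->
      convex_hull ([set x] `|` [set y]) `<=` K.
Proof.
move=> Kc Kman lambda lambda0.
case: d K Kc Kman => [|n] K Kc Kman.
  exists 1; split => // x y r Kx _ _ _ _.
  apply: subset_trans (convex_hull_pair_sub_segment x y) _ => _ [t _ <-].
  by rewrite (_ : _ + _ = x) //; apply/rowP => -[].
have [rho rho0 seg_rho] := compact_uniform_radius _ Kc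
  (fun p Kp => manifold_segment_local Kman lambda0 Kp).
exists rho; split => // x y r Kx yrK xy r0 r_rho.
apply: subset_trans (convex_hull_pair_sub_segment x y) _.
exact: seg_rho x r Kx r_rho y yrK xy r0.
Qed.
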